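(* Let $n\ge1$, let $\mu_n$ be a finite positive regular Borel measure on a compact set, $\phi_n,\phi^n_{ij}\in L^\infty(\mu_n)$ for $1\le i<j\le n$, and let $A_n$ be the operator on $L^2(\mu_n)^{(n)}$ given by the upper triangular $n\times n$ operator matrix with all diagonal entries $M_{\phi_n}$ and $(i,j)$ entry $M_{\phi^n_{ij}}$ for $i<j$, and suppose $A_n$ is a direct integral of strongly irreducible operators. If $M_{\phi^n_{i,i+1}}$ is invertible in $\mathscr{L}(L^2(\mu_n))$ for each $i=1,\dots,n-1$, then there is an invertible operator $X_n\in\mathscr{L}(L^2(\mu_n)^{(n)})$ such that $X_nA_nX_n^{-1}$ is the $n\times n$ operator matrix with all diagonal entries $M_{\phi_n}$, all superdiagonal entries ($(i,i+1)$ entries) equal to the identity $I$, and all other entries $0$.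
   Context: $M_\phi$ denotes the multiplication operator $f\mapsto\phi f$ on $L^2(\mu_n)$. An operator is strongly irreducible if its commutant contains no idempotents other than $0$ and $I$; ''$A_n$ is a direct integral of strongly irreducible operators'' means the fibre matrix (upper triangular with diagonal $\phi_n(\lambda)$ and entries $\phi^n_{ij}(\lambda)$) is strongly irreducible for a.e. $\lambda$. *)

From HB Require Import structures.
From mathcomp Require Import all_boot all_order all_algebra.
From mathcomp Require Import all_classical all_reals all_analysis.
From mathcomp Require Import complex.
Set Implicit Arguments. Unset Strict Implicit. Unset Printing Implicit Defensive.
Import Order.TTheory GRing.Theory Num.Theory.
Import numFieldNormedType.Exports.
Local Open Scope classical_set_scope.
Local Open Scope ring_scope.

(* The underlying space: the complex plane, realised as R * R with its
   (product = Borel) sigma-algebra and product topology. Scalars are R[i]. *)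
Section Defs.
Variable R : realType.
Local Notation T := (R * R)%type.
Local Notation C := R[i].
Variable mu : {measure set T -> \bar R}.

Definition csq (z : C) : R := complex.Re z ^+ 2 + complex.Im z ^+ 2.

Definition cmeasurable (g : T -> C) : Prop :=
  measurable_fun setT (fun x => complex.Re (g x)) /\ measurable_fun setT (fun x => complex.Im (g x)).

Definition Linf (g : T -> C) : Prop :=
  cmeasurable g /\ exists M : R, {ae mu, forall x, csq (g x) <= M}.

(* elements (representatives) of L^2(mu)^(k) : k-tuples of functions *)
Definition vecfun (k : nat) := 'I_k -> T -> C.

Definition vsq k (F : vecfun k) (x : T) : R := \sum_(i < k) csq (F i x).

Definition L2vec k (F : vecfun k) : Prop :=
  (forall i, cmeasurable (F i)) /\ (\int[mu]_x (vsq F x)%:E < +oo)%E.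

Definition aeeq k (F G : vecfun k) : Prop :=
  {ae mu, forall x, forall i, F i x = G i x}.

(* X is (a representative of) an element of L(L^2(mu)^(k)) *)
Definition bounded_op k (X : vecfun k -> vecfun k) : Prop :=
  [/\ (forall F, L2vec F -> L2vec (X F)),
      (forall F G, L2vec F -> L2vec G -> aeeq F G -> aeeq (X F) (X G)),
      (forall (a : C) F G, L2vec F -> L2vec G ->
          aeeq (X (fun i x => a * F i x + G i x))
               (fun i x => a * X F i x + X G i x)) &
      exists c : R, forall F, L2vec F ->
          (\int[mu]_x (vsq (X F) x)%:E <= c%:E * \int[mu]_x (vsq F x)%:E)%E].

Definition is_inverse_op k (X Y : vecfun k -> vecfun k) : Prop :=
  [/\ bounded_op X, bounded_op Y,
      (forall F, L2vec F -> aeeq (Y (X F)) F) &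
      (forall F, L2vec F -> aeeq (X (Y F)) F)].

Definition invertible_op k (X : vecfun k -> vecfun k) : Prop :=
  exists Y, is_inverse_op X Y.

End Defs.

Section Ops.
Variable R : realType.
Local Notation T := (R * R)%type.
Local Notation C := R[i].

Definition sop := (T -> C) -> (T -> C).

Definition Mul (phi : T -> C) : sop := fun f x => phi x * f x.
Definition Iop : sop := id.
Definition Zop : sop := fun _ _ => 0.

(* an operator on L^2(mu) viewed as acting on L^2(mu)^(1) *)
Definition scal_op (S : sop) : vecfun R 1 -> vecfun R 1 := fun F i => S (F i).

Definition opmx k (E : 'I_k -> 'I_k -> sop) : vecfun R k -> vecfun R k :=
  fun F i x => \sum_(j < k) E i j (F j) x.

Definition Aop n (phi : T -> C) (phis : 'I_n -> 'I_n -> T -> C) :=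
  opmx (fun i j => if i == j then Mul phi
                   else if (i < j)%N then Mul (phis i j) else Zop).

Definition Jop n (phi : T -> C) :=
  opmx (fun i j : 'I_n => if i == j then Mul phi
                          else if (j == i.+1 :> nat) then Iop else Zop).

Definition fibre n (phi : T -> C) (phis : 'I_n -> 'I_n -> T -> C) (l : T)
  : 'M[C]_n :=
  \matrix_(i, j) (if i == j then phi l
                  else if (i < j)%N then phis i j l else 0).
End Ops.

Definition strongly_irreducible (F : fieldType) n (A : 'M[F]_n) : Prop :=
  forall P : 'M[F]_n, P *m P = P -> P *m A = A *m P -> P = 0 \/ P = 1%:M.

Definition regular_measure (R : realType) (mu : {measure set (R * R)%type -> \bar R}) : Prop :=
  forall A : set (R * R)%type, measurable A ->
    mu A = ereal_sup [set mu K | K in [set K | compact K /\ K `<=` A]] /\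
    mu A = ereal_inf [set mu U | U in [set U | open U /\ A `<=` U]].

From HB Require Import structures.
From mathcomp Require Import all_boot all_order all_algebra.
From mathcomp Require Import all_classical all_reals all_analysis.
From mathcomp Require Import complex.
From mathcomp Require Import ring lra.
Set Implicit Arguments. Unset Strict Implicit. Unset Printing Implicit Defensive.
Import Order.TTheory GRing.Theory Num.Theory.
Import numFieldNormedType.Exports.
Local Open Scope classical_set_scope.
Local Open Scope ring_scope.

(* The fibre of A_n at x is phi(x) + N(x) with N(x) strictly upper triangular.
   The Krylov matrix X(x), whose i-th row is e_0 N(x)^i, satisfies X N = S X for
   the shift S, so it conjugates the fibre into the Jordan block phi(x) + S.
   X(x) is upper triangular, its diagonal entries being products of the
   superdiagonal entries phi_{l,l+1}(x).  Invertibility of M_{phi_{l,l+1}} bounds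
   |phi_{l,l+1}| below almost everywhere, so det X is bounded away from 0 and
   X^-1 = adj X / det X is bounded as well: multiplication by X is the required
   similarity. *)

Section ComplexSquareNorm.
Variable R : realType.
Local Notation C := R[i].

Lemma cReD (x y : C) : complex.Re (x + y) = complex.Re x + complex.Re y.
Proof. by case: x y => [a b] [c d]. Qed.

Lemma cImD (x y : C) : complex.Im (x + y) = complex.Im x + complex.Im y.
Proof. by case: x y => [a b] [c d]. Qed.

Lemma cReM (x y : C) :
  complex.Re (x * y) = complex.Re x * complex.Re y - complex.Im x * complex.Im y.
Proof. by case: x y => [a b] [c d]. Qed.

Lemma cImM (x y : C) :
  complex.Im (x * y) = complex.Re x * complex.Im y + complex.Im x * complex.Re y.
Proof. by case: x y => [a b] [c d]. Qed.

Lemma cReV (x : C) : complex.Re x^-1 = complex.Re x / csq x.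
Proof. by case: x. Qed.

Lemma cImV (x : C) : complex.Im x^-1 = - (complex.Im x / csq x).
Proof. by case: x. Qed.

Lemma csq_ge0 (x : C) : 0 <= csq x.
Proof. by rewrite /csq; nra. Qed.

Lemma csq0 : csq (0 : C) = 0.
Proof. by rewrite /csq /= expr0n /= addr0. Qed.

Lemma csq1 : csq (1 : C) = 1.
Proof. by rewrite /csq /= expr0n /= addr0 expr1n. Qed.

Lemma csqM (x y : C) : csq (x * y) = csq x * csq y.
Proof. by rewrite /csq cReM cImM; ring. Qed.

Lemma csqV (x : C) : csq x^-1 = (csq x)^-1.
Proof.
rewrite /csq cReV cImV /csq sqrrN !expr_div_n -mulrDl.
set q := _ + _; have [->|q0] := eqVneq q 0; first by rewrite invr0 mul0r.
by rewrite expr2 invfM mulrA mulfV // mul1r.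
Qed.

Lemma csqD_le (x y : C) : csq (x + y) <= 2 * csq x + 2 * csq y.
Proof.
rewrite /csq cReD cImD.
have := sqr_ge0 (complex.Re x - complex.Re y).
have := sqr_ge0 (complex.Im x - complex.Im y).
nra.
Qed.

Lemma csq_sum_le (I : Type) (s : seq I) (z : I -> C) :
  csq (\sum_(i <- s) z i) <= 2 ^+ size s * \sum_(i <- s) csq (z i).
Proof.
elim: s => [|a s IH]; first by rewrite !big_nil csq0 mulr0.
rewrite !big_cons exprS.
have := csqD_le (z a) (\sum_(i <- s) z i).
have : 0 <= \sum_(i <- s) csq (z i) by apply: sumr_ge0 => i _; exact: csq_ge0.
have : 1 <= 2 ^+ size s :> R by rewrite exprn_ege1 // ler1n.
have := csq_ge0 (z a).
nra.
Qed.

End ComplexSquareNorm.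

Section Measurability.
Variable R : realType.
Local Notation T := (R * R)%type.
Local Notation C := R[i].

Lemma cmeasurable_cst (c : C) : cmeasurable (fun _ : T => c).
Proof. by split; exact: measurable_cst. Qed.

Lemma cmeasurableD (f g : T -> C) : cmeasurable f -> cmeasurable g ->
  cmeasurable (fun x => f x + g x).
Proof.
move=> [f1 f2] [g1 g2]; split.
- under eq_fun do rewrite cReD; exact: measurable_realfun.measurable_funD.
- under eq_fun do rewrite cImD; exact: measurable_realfun.measurable_funD.
Qed.

Lemma cmeasurableM (f g : T -> C) : cmeasurable f -> cmeasurable g ->
  cmeasurable (fun x => f x * g x).
Proof.
move=> [f1 f2] [g1 g2]; split.
- under eq_fun do rewrite cReM.
  by apply: measurable_realfun.measurable_funB; apply: measurable_realfun.measurable_funM.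
- under eq_fun do rewrite cImM.
  by apply: measurable_realfun.measurable_funD; apply: measurable_realfun.measurable_funM.
Qed.

Lemma cmeasurable_sum (I : Type) (s : seq I) (f : I -> T -> C) :
  (forall i, cmeasurable (f i)) -> cmeasurable (fun x => \sum_(i <- s) f i x).
Proof.
move=> hf; elim: s => [|a s IH].
  under eq_fun do rewrite big_nil; exact: cmeasurable_cst.
under eq_fun do rewrite big_cons; exact: cmeasurableD.
Qed.

Lemma measurable_csq (f : T -> C) : cmeasurable f ->
  measurable_fun setT (fun x => csq (f x)).
Proof.
move=> [f1 f2].
by apply: measurable_realfun.measurable_funD; apply: measurable_realfun.measurable_funX.
Qed.

Lemma cmeasurableV (f : T -> C) : cmeasurable f -> cmeasurable (fun x => (f x)^-1).
Proof.
move=> hf; have csqV_m : measurable_fun setT (fun x => (csq (f x))^-1).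
  rewrite (_ : (fun x => _) = fun x => powR (csq (f x)) (-1)); last first.
    by apply/funext => x; rewrite powR_inv1 // csq_ge0.
  exact: measurableT_comp (measurable_realfun.measurable_powR (-1)) (measurable_csq hf).
case: hf => f1 f2; split.
- under eq_fun do rewrite cReV; exact: measurable_realfun.measurable_funM.
- under eq_fun do rewrite cImV -mulN1r.
  by apply: measurable_realfun.measurable_funM => //; exact: measurable_realfun.measurable_funM.
Qed.

Lemma measurable_vsq k (F : vecfun R k) : (forall i, cmeasurable (F i)) ->
  measurable_fun setT (vsq F).
Proof. by move=> hF; apply: measurable_sum => i; exact: measurable_csq. Qed.

End Measurability.

Section Linfty.
Variable R : realType.
Local Notation T := (R * R)%type.
Local Notation C := R[i].
Variable mu : {measure set T -> \bar R}.

Lemma ae_forall_fin (I : finType) (P : I -> T -> Prop) :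
  (forall i, {ae mu, forall x, P i x}) -> {ae mu, forall x, forall i, P i x}.
Proof.
move=> hP.
have : {ae mu, forall x, forall n : nat, forall i : I, enum_rank i = n :> nat -> P i x}.
  apply: ae_foralln => n.
  case: (pickP (fun i : I => enum_rank i == n :> nat)) => [i0 /eqP i0n | none].
    apply: filterS (hP i0) => x Px i ni.
    have -> : i = i0 by apply/enum_rank_inj/val_inj; rewrite /= ni i0n.
    exact: Px.
  by apply: aeW => x i ni; move: (none i); rewrite ni eqxx.
by apply: filterS => x H i; exact: (H _ i erefl).
Qed.

Lemma Linf_cst (c : C) : Linf mu (fun _ => c).
Proof. by split; [exact: cmeasurable_cst | exists (csq c); exact: aeW]. Qed.

Lemma Linf_ge0_bound (f : T -> C) : Linf mu f ->
  exists M, 0 <= M /\ {ae mu, forall x, csq (f x) <= M}.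
Proof.
move=> [_ [M hM]]; exists (Num.max M 0); rewrite le_max lexx orbT; split => //.
by apply: filterS hM => x h; rewrite le_max h.
Qed.

Lemma Linf_add (f g : T -> C) : Linf mu f -> Linf mu g -> Linf mu (fun x => f x + g x).
Proof.
move=> hf hg; split; first by apply: cmeasurableD; [case: hf | case: hg].
have [M1 [_ h1]] := Linf_ge0_bound hf; have [M2 [_ h2]] := Linf_ge0_bound hg.
exists (2 * M1 + 2 * M2); apply: filterS2 h1 h2 => x a b.
have := csqD_le (f x) (g x); lra.
Qed.

Lemma Linf_mul (f g : T -> C) : Linf mu f -> Linf mu g -> Linf mu (fun x => f x * g x).
Proof.
move=> hf hg; split; first by apply: cmeasurableM; [case: hf | case: hg].
have [M1 [_ h1]] := Linf_ge0_bound hf; have [M2 [_ h2]] := Linf_ge0_bound hg.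
exists (M1 * M2); apply: filterS2 h1 h2 => x a b.
by rewrite csqM; apply: ler_pM => //; exact: csq_ge0.
Qed.

Lemma Linf_sum (I : Type) (s : seq I) (f : I -> T -> C) :
  (forall i, Linf mu (f i)) -> Linf mu (fun x => \sum_(i <- s) f i x).
Proof.
move=> hf; elim: s => [|a s IH].
  under eq_fun do rewrite big_nil; exact: Linf_cst.
under eq_fun do rewrite big_cons; exact: Linf_add.
Qed.

Lemma Linf_prod (I : Type) (s : seq I) (f : I -> T -> C) :
  (forall i, Linf mu (f i)) -> Linf mu (fun x => \prod_(i <- s) f i x).
Proof.
move=> hf; elim: s => [|a s IH].
  under eq_fun do rewrite big_nil; exact: Linf_cst.
under eq_fun do rewrite big_cons; exact: Linf_mul.
Qed.

Definition Linf_unit (f : T -> C) : Prop :=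
  Linf mu f /\ exists c, 0 < c /\ {ae mu, forall x, c <= csq (f x)}.

Lemma Linf_unit_prod (I : Type) (s : seq I) (f : I -> T -> C) :
  (forall i, Linf_unit (f i)) -> Linf_unit (fun x => \prod_(i <- s) f i x).
Proof.
move=> hf; split; first by apply: Linf_prod => i; case: (hf i).
elim: s => [|a s [c [c0 hc]]].
  by exists 1; split => //; apply: aeW => x; rewrite big_nil csq1.
have [_ [ca [ca0 hca]]] := hf a.
exists (ca * c); split; first exact: mulr_gt0.
apply: filterS2 hca hc => x ha hs; rewrite big_cons csqM.
by apply: ler_pM => //; [exact: ltW | exact: ltW].
Qed.

Lemma Linf_unitV (f : T -> C) : Linf_unit f -> Linf mu (fun x => (f x)^-1).
Proof.
move=> [[hf _] [c [c0 hc]]]; split; first exact: cmeasurableV.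
exists c^-1; apply: filterS hc => x h.
by rewrite csqV lef_pV2 // ?posrE // (lt_le_trans c0 h).
Qed.

Lemma Linf_unit_neq0 (f : T -> C) : Linf_unit f -> {ae mu, forall x, f x != 0}.
Proof.
move=> [_ [c [c0 hc]]]; apply: filterS hc => x h.
by apply: contraTneq h => ->; rewrite csq0 -ltNge.
Qed.

End Linfty.

Section MatrixMultiplicationOperators.
Variable R : realType.
Local Notation T := (R * R)%type.
Local Notation C := R[i].
Variable mu : {measure set T -> \bar R}.

Definition Linf_mx k (M : T -> 'M[C]_k) := forall i j, Linf mu (fun x => M x i j).

Definition mx_op k (M : T -> 'M[C]_k) : vecfun R k -> vecfun R k :=
  opmx (fun i j => Mul (fun x => M x i j)).

Lemma Linf_mx_cst k (A : 'M[C]_k) : Linf_mx (fun _ => A).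
Proof. by move=> i j; exact: Linf_cst. Qed.

Lemma Linf_mxM k (M N : T -> 'M[C]_k) : Linf_mx M -> Linf_mx N ->
  Linf_mx (fun x => M x *m N x).
Proof.
move=> hM hN i j; under eq_fun do rewrite mxE.
by apply: Linf_sum => l; exact: Linf_mul.
Qed.

Lemma Linf_mxX m (M : T -> 'M[C]_m.+1) p : Linf_mx M -> Linf_mx (fun x => M x ^+ p).
Proof.
move=> hM; elim: p => [|p IH].
  under eq_fun do rewrite expr0; exact: Linf_mx_cst.
under eq_fun do rewrite exprSr -mulmxE; exact: Linf_mxM.
Qed.

Lemma Linf_det k (M : T -> 'M[C]_k) : Linf_mx M -> Linf mu (fun x => \det (M x)).
Proof.
move=> hM; apply: Linf_sum => s.
by apply: Linf_mul; [exact: Linf_cst | apply: Linf_prod => i; exact: hM].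
Qed.

Lemma Linf_mx_adj k (M : T -> 'M[C]_k) : Linf_mx M -> Linf_mx (fun x => \adj (M x)).
Proof.
move=> hM i j; under eq_fun do rewrite mxE /cofactor.
apply: Linf_mul; first exact: Linf_cst.
by apply: Linf_det => a b; under eq_fun do rewrite !mxE; exact: hM.
Qed.

(* The inverse of [M] through its adjugate; unlike [invmx M], its entries are
   measurable without a case analysis on [M \in unitmx]. *)
Definition adj_inv k (M : 'M[C]_k) : 'M[C]_k := (\det M)^-1 *: \adj M.

Lemma mulmx_adj_inv k (M : 'M[C]_k) : \det M != 0 -> M *m adj_inv M = 1%:M.
Proof. by move=> dM; rewrite -scalemxAr mul_mx_adj scale_scalar_mx mulVf. Qed.

Lemma adj_inv_mulmx k (M : 'M[C]_k) : \det M != 0 -> adj_inv M *m M = 1%:M.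
Proof. by move=> dM; rewrite -scalemxAl mul_adj_mx scale_scalar_mx mulVf. Qed.

Lemma Linf_mx_adj_inv k (M : T -> 'M[C]_k) : Linf_mx M ->
  Linf_unit mu (fun x => \det (M x)) -> Linf_mx (fun x => adj_inv (M x)).
Proof.
move=> hM hdet i j; under eq_fun do rewrite mxE.
by apply: Linf_mul; [exact: Linf_unitV | exact: Linf_mx_adj].
Qed.

Lemma vsq_ge0 k (F : vecfun R k) x : 0 <= vsq F x.
Proof. by apply: sumr_ge0 => i _; exact: csq_ge0. Qed.

Lemma integral_vsq_le k (F G : vecfun R k) (K : R) : 0 <= K ->
  (forall i, cmeasurable (F i)) -> (forall i, cmeasurable (G i)) ->
  {ae mu, forall x, vsq G x <= K * vsq F x} ->
  (\int[mu]_x (vsq G x)%:E <= K%:E * \int[mu]_x (vsq F x)%:E)%E.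
Proof.
move=> K0 mF mG hle.
have mvF := measurable_vsq mF; have mvG := measurable_vsq mG.
rewrite -ge0_integralZl //; last by move=> x _; rewrite lee_fin vsq_ge0.
  apply: ae_ge0_le_integral => //.
  - by move=> x _; rewrite lee_fin vsq_ge0.
  - exact/measurable_realfun.measurable_EFinP.
  - by move=> x _; rewrite lee_fin mulr_ge0 // vsq_ge0.
  - apply/measurable_realfun.measurable_EFinP.
    by apply: measurable_realfun.measurable_funM => //; exact: measurable_cst.
  - by apply: filterS hle => x h _; rewrite lee_fin.
exact/measurable_realfun.measurable_EFinP.
Qed.

Lemma integral_vsq_aeeq k (F G : vecfun R k) :
  (forall i, cmeasurable (F i)) -> (forall i, cmeasurable (G i)) -> aeeq mu F G ->
  (\int[mu]_x (vsq F x)%:E = \int[mu]_x (vsq G x)%:E)%E.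
Proof.
move=> mF mG hFG; apply: ae_eq_integral => //.
- by apply/measurable_realfun.measurable_EFinP; exact: measurable_vsq.
- by apply/measurable_realfun.measurable_EFinP; exact: measurable_vsq.
- apply: filterS hFG => x h _; rewrite /vsq; congr EFin.
  by apply: eq_bigr => i _; rewrite h.
Qed.

Lemma Linf_mx_bound k (M : T -> 'M[C]_k) : Linf_mx M ->
  exists B, 0 <= B /\ {ae mu, forall x, forall i j, csq (M x i j) <= B}.
Proof.
move=> hM.
have [Mb hMb] := boolp.choice (fun p : 'I_k * 'I_k => Linf_ge0_bound (hM p.1 p.2)).
exists (\sum_p Mb p); split; first by apply: sumr_ge0 => p _; case: (hMb p).
have : {ae mu, forall x, forall p : 'I_k * 'I_k, csq (M x p.1 p.2) <= Mb p}.
  by apply: ae_forall_fin => p; case: (hMb p).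
apply: filterS => x h i j; apply: le_trans (h (i, j)) _.
by rewrite (bigD1 (i, j)) //= lerDl; apply: sumr_ge0 => p _; case: (hMb p).
Qed.

Lemma mx_op_cmeasurable k (M : T -> 'M[C]_k) (F : vecfun R k) : Linf_mx M ->
  (forall i, cmeasurable (F i)) -> forall i, cmeasurable (mx_op M F i).
Proof.
move=> hM hF i; apply: cmeasurable_sum => j.
by apply: cmeasurableM => //; case: (hM i j).
Qed.

Lemma vsq_mx_op_le k (M : T -> 'M[C]_k) : Linf_mx M -> exists K, 0 <= K /\
  forall F : vecfun R k, {ae mu, forall x, vsq (mx_op M F) x <= K * vsq F x}.
Proof.
move=> hM; have [B [B0 hB]] := Linf_mx_bound hM.
exists (\sum_(i < k) 2 ^+ size (index_enum 'I_k) * B).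
split; first by apply: sumr_ge0 => i _; rewrite mulr_ge0 ?exprn_ge0.
move=> F; apply: filterS hB => x hx.
rewrite /vsq /mx_op /opmx /Mul mulr_suml.
apply: ler_sum => i _; apply: le_trans (csq_sum_le _ _) _.
rewrite -mulrA ler_wpM2l ?exprn_ge0 // mulr_sumr; apply: ler_sum => j _.
by rewrite csqM ler_wpM2r ?csq_ge0.
Qed.

Lemma mx_op_bounded k (M : T -> 'M[C]_k) : Linf_mx M -> bounded_op mu (mx_op M).
Proof.
move=> hM; have [K [K0 hK]] := vsq_mx_op_le hM.
have normK F : (forall i, cmeasurable (F i)) ->
    (\int[mu]_x (vsq (mx_op M F) x)%:E <= K%:E * \int[mu]_x (vsq F x)%:E)%E.
  by move=> mF; apply: integral_vsq_le => //; exact: mx_op_cmeasurable.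
split.
- move=> F [mF iF]; split; first exact: mx_op_cmeasurable.
  by apply: le_lt_trans (normK F mF) _; apply: lte_mul_pinfty; rewrite ?lee_fin.
- move=> F G _ _ hFG; apply: filterS hFG => x h i.
  by apply: eq_bigr => j _; rewrite /Mul h.
- move=> a F G _ _; apply: aeW => x i; rewrite /mx_op /opmx /Mul.
  by rewrite mulr_sumr -big_split /=; apply: eq_bigr => j _; ring.
- by exists K => F [mF _]; exact: normK.
Qed.

Lemma mx_op_comp k (M N : T -> 'M[C]_k) (F : vecfun R k) :
  mx_op M (mx_op N F) = mx_op (fun x => M x *m N x) F.
Proof.
apply/funext => i; apply/funext => x; rewrite /mx_op /opmx /Mul /=.
under eq_bigr do rewrite mulr_sumr.
rewrite exchange_big /=; apply: eq_bigr => l _.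
by rewrite mxE mulr_suml; apply: eq_bigr => j _; rewrite mulrA.
Qed.

Lemma mx_op_aeeq k (M N : T -> 'M[C]_k) (F : vecfun R k) :
  {ae mu, forall x, M x = N x} -> aeeq mu (mx_op M F) (mx_op N F).
Proof.
move=> h; apply: filterS h => x h i.
by apply: eq_bigr => j _; rewrite /Mul h.
Qed.

Lemma mx_op1 k (F : vecfun R k) : mx_op (fun _ => 1%:M) F = F.
Proof.
apply/funext => i; apply/funext => x; rewrite /mx_op /opmx /Mul.
rewrite (bigD1 i) //= big1 ?addr0; first by rewrite mxE eqxx mul1r.
by move=> j ji; rewrite mxE eq_sym (negbTE ji) mul0r.
Qed.

Lemma mx_op_inverse k (M : T -> 'M[C]_k) : Linf_mx M ->
  Linf_unit mu (fun x => \det (M x)) ->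
  is_inverse_op mu (mx_op M) (mx_op (fun x => adj_inv (M x))).
Proof.
move=> hM hdet; have det0 := Linf_unit_neq0 hdet.
split.
- exact: mx_op_bounded.
- exact/mx_op_bounded/Linf_mx_adj_inv.
- move=> F _; rewrite mx_op_comp -[X in aeeq _ _ X]mx_op1; apply: mx_op_aeeq.
  by apply: filterS det0 => x; exact: adj_inv_mulmx.
- move=> F _; rewrite mx_op_comp -[X in aeeq _ _ X]mx_op1; apply: mx_op_aeeq.
  by apply: filterS det0 => x; exact: mulmx_adj_inv.
Qed.

Lemma mx_op_similar k (X A B : T -> 'M[C]_k) : Linf_mx X ->
  Linf_unit mu (fun x => \det (X x)) ->
  {ae mu, forall x, X x *m A x = B x *m X x} ->
  exists P Q, is_inverse_op mu P Q /\
    forall G, aeeq mu (P (mx_op A (Q G))) (mx_op B G).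
Proof.
move=> hX hdet hXA; exists (mx_op X), (mx_op (fun x => adj_inv (X x))).
split; first exact: mx_op_inverse.
move=> G; rewrite !mx_op_comp; apply: mx_op_aeeq.
apply: filterS2 hXA (Linf_unit_neq0 hdet) => x XA det0.
by rewrite XA -mulmxA mulmx_adj_inv // mulmx1.
Qed.

End MatrixMultiplicationOperators.

Section InvertibleMultiplicationOperator.
Variable R : realType.
Local Notation T := (R * R)%type.
Local Notation C := R[i].
Variable mu : {measure set T -> \bar R}.

Lemma inverse_op_bounded_below k (X Y : vecfun R k -> vecfun R k) :
  is_inverse_op mu X Y -> exists c, 0 < c /\ forall F, L2vec mu F ->
    (\int[mu]_x (vsq F x)%:E <= c%:E * \int[mu]_x (vsq (X F) x)%:E)%E.
Proof.
move=> [[XL2 _ _ _] [YL2 _ _ [c hc]] YX _].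
exists (Num.max c 1); split; first by rewrite lt_max ltr01 orbT.
move=> F hF; have hXF := XL2 F hF; have hYXF := YL2 _ hXF.
rewrite -(integral_vsq_aeeq (proj1 hYXF) (proj1 hF) (YX F hF)).
apply: le_trans (hc _ hXF) _; apply: lee_wpmul2r; last by rewrite lee_fin le_max lexx.
by apply: integral_ge0 => x _; rewrite lee_fin vsq_ge0.
Qed.

(* Testing the lower bound on the indicator of [{|s|^2 < eps}] shows that this
   set is null once [eps] is small compared with the norm of the inverse. *)
Lemma invertible_mul_op_Linf_unit (s : T -> C) : (mu setT < +oo)%E -> Linf mu s ->
  invertible_op mu (scal_op (Mul s)) -> Linf_unit mu s.
Proof.
move=> mufin hs [Y hinv]; split => //.
have [c [c0 hc]] := inverse_op_bounded_below hinv.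
set eps := (2 * c)^-1.
have eps0 : 0 < eps by rewrite invr_gt0 mulr_gt0.
exists eps; split => //.
set S := [set x | csq (s x) < eps].
have mS : measurable S.
  rewrite (_ : S = (fun x => csq (s x)) @^-1` `]-oo, eps[); last first.
    by apply/seteqP; split => x /=; rewrite in_itv.
  by rewrite -[_ @^-1` _]setTI; apply: (measurable_csq (proj1 hs)).
pose F : vecfun R 1 := fun _ x => Complex (\1_S x) 0.
have mF i : cmeasurable (F i).
  by split; [exact: measurable_realfun.measurable_indic | exact: measurable_cst].
have vF x : vsq F x = \1_S x.
  rewrite /vsq big_ord1 /F /csq /= expr0n /= addr0 indicE.
  by case: (x \in S); rewrite ?expr1n ?expr0n.
have intF : (\int[mu]_x (vsq F x)%:E = mu S)%E.
  by under eq_integral do rewrite vF; rewrite integral_indic // setIT.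
have [r muS] : exists r, mu S = r%:E.
  exists (fine (mu S)); rewrite fineK // ge0_fin_numE ?measure_ge0 //.
  by apply: le_lt_trans mufin; apply: le_measure; rewrite ?inE.
have r0 : 0 <= r by rewrite -lee_fin -muS measure_ge0.
have F_L2 : L2vec mu F by split => //; rewrite intF muS ltry.
have sF_le : (\int[mu]_x (vsq (scal_op (Mul s) F) x)%:E <= eps%:E * mu S)%E.
  rewrite -intF; apply: integral_vsq_le => //; first exact: ltW.
    by move=> i; apply: cmeasurableM => //; case: hs.
  apply: aeW => x; rewrite /vsq !big_ord1 /scal_op /Mul csqM.
  rewrite (_ : csq (F ord0 x) = \1_S x); last by rewrite -vF /vsq big_ord1.
  rewrite indicE; case: (boolP (x \in S)) => hx; rewrite ?mulr1 ?mulr0 //.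
  by move/set_mem: hx => /ltW.
have r_le : r <= c * (eps * r).
  have c0E : (0 <= c%:E)%E by rewrite lee_fin ltW.
  have := le_trans (hc F F_L2) (lee_wpmul2l c0E sF_le).
  by rewrite intF muS -!EFinM lee_fin.
have ce : c * eps = 2^-1 by rewrite /eps invfM mulrCA mulfV ?mulr1 // gt_eqF.
exists S; split => //.
  by rewrite muS (_ : r = 0) //; move: r_le; rewrite mulrA ce; lra.
by move=> x /= hx; rewrite /S /= ltNge; apply/negP.
Qed.

End InvertibleMultiplicationOperator.

Section KrylovMatrix.
Variables (F : comNzRingType) (m : nat).
Local Notation n := m.+1.

Definition strictly_upper (N : 'M[F]_n) := forall i j : 'I_n, (j <= i)%N -> N i j = 0.

Definition krylov_mx (N : 'M[F]_n) : 'M[F]_n := \matrix_(i, j) (N ^+ i) 0 j.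

Definition shift_mx : 'M[F]_n := \matrix_(i, j) (j == i.+1 :> nat)%:R.

(* [inord] wraps around, so [superdiag N l] is meaningful only for [l < m]. *)
Definition superdiag (N : 'M[F]_n) (l : nat) : F := N (inord l) (inord l.+1).

Variable N : 'M[F]_n.
Hypothesis N_upper : strictly_upper N.

Lemma strictly_upper_expr_eq0 p (i j : 'I_n) : (j < i + p)%N -> (N ^+ p) i j = 0.
Proof.
elim: p i j => [|p IH] i j hj.
  rewrite expr0 mxE (_ : (i == j) = false) //.
  by apply/eqP => ij; rewrite ij addn0 ltnn in hj.
rewrite exprSr -mulmxE mxE big1 // => l _.
case: (ltnP l (i + p)) => hl; first by rewrite IH // mul0r.
by rewrite N_upper ?mulr0 //; apply: leq_trans hl; rewrite -ltnS -addnS.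
Qed.

Lemma expr_strictly_upper_diag p (j : 'I_n) : j = p :> nat ->
  (N ^+ p) 0 j = \prod_(l < p) superdiag N l.
Proof.
elim: p j => [|p IH] j jp.
  by rewrite expr0 big_ord0 mxE (_ : 0 == j) //; apply/eqP/val_inj.
have pn : (p < n)%N by apply: ltn_trans (ltn_ord j); rewrite jp.
rewrite exprSr -mulmxE mxE (bigD1 (Ordinal pn)) //= big1 ?addr0.
  rewrite IH // big_ord_recr /=; congr (_ * _); rewrite /superdiag.
  by congr (N _ _); apply/val_inj; rewrite /= inordK // -jp.
move=> l hl; case: (ltnP l p) => hlp.
  by rewrite strictly_upper_expr_eq0 ?mul0r.
rewrite N_upper ?mulr0 // jp ltn_neqAle hlp andbT.
by apply: contra hl => /eqP pl; apply/eqP/val_inj; rewrite /= pl.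
Qed.

Lemma krylov_mx_shift : krylov_mx N *m N = shift_mx *m krylov_mx N.
Proof.
apply/matrixP => i j; rewrite !mxE.
transitivity ((N ^+ i.+1) 0 j).
  by rewrite exprSr -mulmxE mxE; apply: eq_bigr => l _; rewrite mxE.
case: (ltnP i m) => im.
  rewrite (bigD1 (Ordinal (im : (i.+1 < n)%N))) //= big1 ?addr0.
    by rewrite !mxE eqxx mul1r.
  move=> l hl; rewrite mxE (_ : (l == i.+1 :> nat) = false) ?mul0r //.
  by apply/negbTE; apply: contra hl => /eqP li; apply/eqP/val_inj.
rewrite strictly_upper_expr_eq0; last by rewrite add0n (leq_trans (ltn_ord j)).
rewrite big1 // => l _; rewrite mxE (_ : (l == i.+1 :> nat) = false) ?mul0r //.
by apply/negbTE; rewrite neq_ltn (leq_trans (ltn_ord l)).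
Qed.

Lemma krylov_mx_conj (c : F) :
  krylov_mx N *m (c%:M + N) = (c%:M + shift_mx) *m krylov_mx N.
Proof. by rewrite mulmxDr mulmxDl krylov_mx_shift mul_mx_scalar mul_scalar_mx. Qed.

Lemma det_krylov_mx : \det (krylov_mx N) = \prod_(i < n) \prod_(l < i) superdiag N l.
Proof.
rewrite -det_tr det_trig; last first.
  by apply/is_trig_mxP => i j ij; rewrite !mxE strictly_upper_expr_eq0 // add0n.
by apply: eq_bigr => i _; rewrite !mxE expr_strictly_upper_diag.
Qed.

End KrylovMatrix.

Section FibreDecomposition.
Variable R : realType.
Local Notation T := (R * R)%type.
Local Notation C := R[i].
Variable mu : {measure set T -> \bar R}.

Definition fibre_nilpart n (phis : 'I_n -> 'I_n -> T -> C) (x : T) : 'M[C]_n :=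
  \matrix_(i, j) (if (i < j)%N then phis i j x else 0).

Lemma fibre_nilpart_strictly_upper m (phis : 'I_m.+1 -> 'I_m.+1 -> T -> C) x :
  strictly_upper (fibre_nilpart phis x).
Proof. by move=> i j ji; rewrite mxE ltnNge ji. Qed.

Lemma fibreE n (phi : T -> C) (phis : 'I_n -> 'I_n -> T -> C) :
  fibre phi phis = fun x => (phi x)%:M + fibre_nilpart phis x.
Proof.
apply/funext => x; apply/matrixP => i j; rewrite !mxE.
by case: eqVneq => [->|_]; rewrite ?ltnn ?mulr1n ?addr0 ?mulr0n ?add0r.
Qed.

Lemma Aop_mx_op n (phi : T -> C) (phis : 'I_n -> 'I_n -> T -> C) :
  Aop phi phis = mx_op (fibre phi phis).
Proof.
apply/funext => G; apply/funext => i; apply/funext => x.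
apply: eq_bigr => j _; rewrite /Mul mxE.
by case: ifP => _ //; case: ifP => _ //; rewrite /Zop mul0r.
Qed.

Lemma Jop_mx_op m (phi : T -> C) :
  Jop phi = mx_op (fun x => (phi x)%:M + shift_mx _ m).
Proof.
apply/funext => G; apply/funext => i; apply/funext => x.
apply: eq_bigr => j _; rewrite /Mul !mxE.
case: eqVneq => [->|_]; first by rewrite (ltn_eqF (ltnSn _)) mulr1n addr0.
by rewrite mulr0n add0r; case: ifP => _; rewrite ?mul1r ?mul0r.
Qed.

Lemma strictly_upper_similar_shift m (c : T -> C) (N : T -> 'M[C]_m.+1) :
  Linf_mx mu N -> (forall x, strictly_upper (N x)) ->
  (forall l, (l < m)%N -> Linf_unit mu (fun x => superdiag (N x) l)) ->
  exists P Q, is_inverse_op mu P Q /\ forall G,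
    aeeq mu (P (mx_op (fun x => (c x)%:M + N x) (Q G)))
            (mx_op (fun x => (c x)%:M + shift_mx _ m) G).
Proof.
move=> hN Nup hsup; apply: (@mx_op_similar _ _ _ (fun x => krylov_mx (N x))).
- by move=> i j; under eq_fun do rewrite /krylov_mx mxE; exact: (Linf_mxX i hN).
- under eq_fun => x do rewrite (det_krylov_mx (Nup x)).
  apply: Linf_unit_prod => i; apply: Linf_unit_prod => l.
  by apply: hsup; rewrite (leq_trans (ltn_ord l)) // -ltnS.
- by apply: aeW => x; exact: krylov_mx_conj.
Qed.

End FibreDecomposition.

Theorem lemma2p4 (R : realType) (n : nat) (hn : (1 <= n)%N)
  (mu : {measure set (R * R)%type -> \bar R})
  (K : set (R * R)%type) (hK : compact K) (hsupp : mu (~` K) = 0%E)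
  (hfin : (mu setT < +oo)%E) (hreg : regular_measure mu)
  (phi : (R * R)%type -> R[i]) (phis : 'I_n -> 'I_n -> (R * R)%type -> R[i])
  (hphi : Linf mu phi)
  (hphis : forall i j : 'I_n, (i < j)%N -> Linf mu (phis i j))
  (hsi : {ae mu, forall l, strongly_irreducible (fibre phi phis l)})
  (hinv : forall i j : 'I_n, (j = i.+1 :> nat) ->
            invertible_op mu (scal_op (Mul (phis i j)))) :
  exists X Y : vecfun R n -> vecfun R n,
    is_inverse_op mu X Y /\
    forall G, L2vec mu G -> aeeq mu (X (Aop phi phis (Y G))) (Jop phi G).
Proof.
case: n hn phis hphis hsi hinv => [//|m] _ phis hphis _ hinv.
have hN : Linf_mx mu (fibre_nilpart phis).
  move=> i j; under eq_fun do rewrite mxE.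
  by case: (boolP (i < j)%N) => ij; [exact: hphis | exact: Linf_cst].
have hsup l : (l < m)%N -> Linf_unit mu (fun x => superdiag (fibre_nilpart phis x) l).
  move=> lm; have [l0 l1] : @inord m l = l :> nat /\ @inord m l.+1 = l.+1 :> nat.
    by rewrite !inordK // ltnW.
  have lt01 : (@inord m l < @inord m l.+1)%N by rewrite l0 l1.
  under eq_fun do rewrite /superdiag mxE lt01.
  apply: invertible_mul_op_Linf_unit hfin (hphis _ _ lt01) (hinv _ _ _).
  by rewrite l0 l1.
have [X [Y [XY XAY]]] :=
  strictly_upper_similar_shift phi hN (fibre_nilpart_strictly_upper phis) hsup.
exists X, Y; split => // G _.
by rewrite Aop_mx_op fibreE Jop_mx_op.
Qed.
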